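(* There exist a harmonic function $h$ on $\mathbf D$ and a constant $B>0$ such that $|h(z)|\le B|z|$ for all $z\in\mathbf D$ and $\max_{1/6<r<1/3}h(re^{i\theta})\ge1$ for every $\theta\in[0,2\pi)$.
   Context: $\mathbf D$ is the open unit disc. *)

From Stdlib Require Import Reals.
From Coquelicot Require Import Coquelicot.
Open Scope R_scope.

(* A real-valued function on the plane is written h : R -> R -> R,
   h x y = h(x + i y). *)

Definition in_disc (x y : R) : Prop := x ^ 2 + y ^ 2 < 1.

Definition dx (f : R -> R -> R) (x y : R) : R := Derive (fun t => f t y) x.
Definition dy (f : R -> R -> R) (x y : R) : R := Derive (fun t => f x t) y.

Definition cont2 (f : R -> R -> R) (x y : R) : Prop :=
  continuous (fun p : R * R => f (fst p) (snd p)) (x, y).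

Definition harmonic_on_disc (h : R -> R -> R) : Prop :=
  forall x y, in_disc x y ->
    cont2 h x y /\
    ex_derive (fun t => h t y) x /\ ex_derive (fun t => h x t) y /\
    cont2 (dx h) x y /\ cont2 (dy h) x y /\
    ex_derive (fun t => dx h t y) x /\ ex_derive (fun t => dx h x t) y /\
    ex_derive (fun t => dy h t y) x /\ ex_derive (fun t => dy h x t) y /\
    cont2 (dx (dx h)) x y /\ cont2 (dy (dx h)) x y /\
    cont2 (dx (dy h)) x y /\ cont2 (dy (dy h)) x y /\
    dx (dx h) x y + dy (dy h) x y = 0.

From Stdlib Require Import Reals Lra ZArith FunctionalExtensionality.
From Coquelicot Require Import Coquelicot.
Open Scope R_scope.

(* Let Phi (w) = Re (cosh w + cos w) and h4 (z) = Phi (N z^4) - 2 with N = 5184.  As the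
   real part of an entire function, h4 is harmonic; h4 (0) = 0 and Phi is Lipschitz on
   bounded sets, so |h4 z| <= B |z|.  On the ray of angle theta, N z^4 = t e^{4 i theta}
   with t = N r^4, and t ranges over (4, 64) as r ranges over (1/6, 1/3).  Since Phi is
   even in each variable and symmetric, it suffices to find, for X + i Y on the unit
   circle with 0 <= Y <= X, some t in (4, 64) with Phi (t X, t Y) >= 3.  If Y <= 1/6,
   t = 6 works because cosh (6 X) dominates.  Otherwise pick t with t Y in 2 pi N, so
   that cos (t Y) = 1: then either cos (t X) >= 0, or t X >= t Y + pi/2 and
   cosh (t X) outweighs cos (t X) cosh (t Y). *)

Definition Phi (a b : R) : R := cosh a * cos b + cos a * cosh b.
Definition Phi_a (a b : R) : R := sinh a * cos b - sin a * cosh b.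
Definition Phi_b (a b : R) : R := - (cosh a * sin b) + cos a * sinh b.
Definition Phi_aa (a b : R) : R := cosh a * cos b - cos a * cosh b.
Definition Phi_ab (a b : R) : R := - (sinh a * sin b) - sin a * sinh b.

(* re4 + i im4 = (x + i y)^4.  The derivatives of im4 are read off those of re4 by the
   Cauchy-Riemann equations, which is how the formulas for the derivatives of h4 arise. *)
Definition re4 (x y : R) : R := x*x*x*x - 6*x*x*y*y + y*y*y*y.
Definition im4 (x y : R) : R := 4*x*x*x*y - 4*x*y*y*y.
Definition re4_x (x y : R) : R := 4*x*x*x - 12*x*y*y.
Definition re4_y (x y : R) : R := -12*x*x*y + 4*y*y*y.
Definition re4_xx (x y : R) : R := 12*x*x - 12*y*y.
Definition re4_xy (x y : R) : R := -24*x*y.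

(* 5184 = 4 * 6^4 = 64 * 3^4. *)
Definition Nscale : R := 5184.

Definition h4 (x y : R) : R := Phi (Nscale * re4 x y) (Nscale * im4 x y) - 2.

Definition h4_x (x y : R) : R :=
  let a := Nscale * re4 x y in let b := Nscale * im4 x y in
  Nscale * (Phi_a a b * re4_x x y - Phi_b a b * re4_y x y).
Definition h4_y (x y : R) : R :=
  let a := Nscale * re4 x y in let b := Nscale * im4 x y in
  Nscale * (Phi_a a b * re4_y x y + Phi_b a b * re4_x x y).
Definition h4_xx (x y : R) : R :=
  let a := Nscale * re4 x y in let b := Nscale * im4 x y in
  Nscale * Nscale * (Phi_aa a b * (re4_x x y * re4_x x y - re4_y x y * re4_y x y)
                - 2 * Phi_ab a b * re4_x x y * re4_y x y)
  + Nscale * (Phi_a a b * re4_xx x y - Phi_b a b * re4_xy x y).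
Definition h4_xy (x y : R) : R :=
  let a := Nscale * re4 x y in let b := Nscale * im4 x y in
  Nscale * Nscale * (2 * Phi_aa a b * re4_x x y * re4_y x y
                + Phi_ab a b * (re4_x x y * re4_x x y - re4_y x y * re4_y x y))
  + Nscale * (Phi_a a b * re4_xy x y + Phi_b a b * re4_xx x y).
(* Since Phi_bb = - Phi_aa, is_derive_h4_yy below is exactly the harmonicity of h4. *)
Definition h4_yy (x y : R) : R := - h4_xx x y.

Ltac unfold_h4 := unfold h4, h4_x, h4_y, h4_yy, h4_xx, h4_xy, Phi, Phi_a, Phi_b,
  Phi_aa, Phi_ab, cosh, sinh, re4, im4, re4_x, re4_y, re4_xx, re4_xy.

Ltac solve_derive := unfold_h4; auto_derive; [easy | unfold Rminus, Rdiv; ring].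

Lemma is_derive_h4_x x y : is_derive (fun t => h4 t y) x (h4_x x y).
Proof. solve_derive. Qed.
Lemma is_derive_h4_y x y : is_derive (fun t => h4 x t) y (h4_y x y).
Proof. solve_derive. Qed.
Lemma is_derive_h4_xx x y : is_derive (fun t => h4_x t y) x (h4_xx x y).
Proof. solve_derive. Qed.
Lemma is_derive_h4_xy x y : is_derive (fun t => h4_x x t) y (h4_xy x y).
Proof. solve_derive. Qed.
Lemma is_derive_h4_yx x y : is_derive (fun t => h4_y t y) x (h4_xy x y).
Proof. solve_derive. Qed.
Lemma is_derive_h4_yy x y : is_derive (fun t => h4_y x t) y (h4_yy x y).
Proof. solve_derive. Qed.

Lemma dx_of_is_derive (f g : R -> R -> R) :
  (forall x y, is_derive (fun t => f t y) x (g x y)) -> dx f = g.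
Proof.
  intros Hf. do 2 (apply functional_extensionality; intro).
  exact (is_derive_unique _ _ _ (Hf _ _)).
Qed.

Lemma dy_of_is_derive (f g : R -> R -> R) :
  (forall x y, is_derive (fun t => f x t) y (g x y)) -> dy f = g.
Proof.
  intros Hf. do 2 (apply functional_extensionality; intro).
  exact (is_derive_unique _ _ _ (Hf _ _)).
Qed.

Ltac solve_cont2 := unfold cont2; unfold_h4; unfold Rminus, Rdiv; cbv beta zeta;
  repeat match goal with
  | |- continuous (fun q => @?f q + @?g q) _ => apply (continuous_plus f g)
  | |- continuous (fun q => @?f q * @?g q) _ => apply (continuous_mult f g)
  | |- continuous (fun q => - @?f q) _ => apply (continuous_opp f)
  | |- continuous (fun q => exp (@?f q)) _ => apply (continuous_comp f exp); [|apply continuous_exp]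
  | |- continuous (fun q => cos (@?f q)) _ => apply (continuous_comp f cos); [|apply continuous_cos]
  | |- continuous (fun q => sin (@?f q)) _ => apply (continuous_comp f sin); [|apply continuous_sin]
  | |- continuous (fun q => fst q) _ => apply continuous_fst
  | |- continuous (fun q => snd q) _ => apply continuous_snd
  | |- continuous (fun q => _) _ => apply continuous_const
  end.

Lemma harmonic_on_disc_h4 : harmonic_on_disc h4.
Proof.
  intros x y _.
  rewrite (dx_of_is_derive _ _ is_derive_h4_x), (dy_of_is_derive _ _ is_derive_h4_y),
    (dx_of_is_derive _ _ is_derive_h4_xx), (dy_of_is_derive _ _ is_derive_h4_xy),
    (dx_of_is_derive _ _ is_derive_h4_yx), (dy_of_is_derive _ _ is_derive_h4_yy).
  repeat split; try solve [solve_cont2].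
  - eexists; apply is_derive_h4_x.
  - eexists; apply is_derive_h4_y.
  - eexists; apply is_derive_h4_xx.
  - eexists; apply is_derive_h4_xy.
  - eexists; apply is_derive_h4_yx.
  - eexists; apply is_derive_h4_yy.
  - unfold h4_yy; ring.
Qed.

Lemma cosh_Rabs a : cosh (Rabs a) = cosh a.
Proof.
  unfold cosh. destruct (Rcase_abs a).
  - rewrite Rabs_left by lra. rewrite Ropp_involutive. lra.
  - rewrite Rabs_right by lra. reflexivity.
Qed.

Lemma cos_Rabs a : cos (Rabs a) = cos a.
Proof.
  destruct (Rcase_abs a).
  - rewrite Rabs_left, cos_neg by lra. reflexivity.
  - rewrite Rabs_right by lra. reflexivity.
Qed.

Lemma exp_le_compat a b : a <= b -> exp a <= exp b.
Proof. intros [Hab | ->]; [left; apply exp_increasing|]; lra. Qed.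

Lemma cosh_pos a : 0 < cosh a.
Proof. unfold cosh. pose proof (exp_pos a). pose proof (exp_pos (- a)). lra. Qed.

Lemma cosh_le_exp_Rabs a : cosh a <= exp (Rabs a).
Proof.
  rewrite <- cosh_Rabs. unfold cosh.
  assert (exp (- Rabs a) <= exp (Rabs a)) by (apply exp_le_compat; pose proof (Rabs_pos a); lra).
  lra.
Qed.

Lemma Rabs_sinh_le_exp_Rabs a : Rabs (sinh a) <= exp (Rabs a).
Proof.
  apply Rle_trans with (cosh a); [|apply cosh_le_exp_Rabs].
  unfold sinh, cosh. pose proof (exp_pos a). pose proof (exp_pos (- a)).
  apply Rabs_le. lra.
Qed.

Lemma Rabs_Phi_a_le a b : Rabs (Phi_a a b) <= exp (Rabs a) + exp (Rabs b).
Proof.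
  unfold Phi_a. eapply Rle_trans; [apply Rabs_triang|]. rewrite Rabs_Ropp, !Rabs_mult.
  pose proof (Rabs_sinh_le_exp_Rabs a). pose proof (cosh_le_exp_Rabs b).
  assert (Rabs (cos b) <= 1) by (apply Rabs_le, COS_bound).
  assert (Rabs (sin a) <= 1) by (apply Rabs_le, SIN_bound).
  rewrite (Rabs_right (cosh b)) by (left; apply cosh_pos).
  pose proof (Rabs_pos (sinh a)). pose proof (Rabs_pos (cos b)).
  pose proof (Rabs_pos (sin a)). pose proof (cosh_pos b). nra.
Qed.

Lemma Rabs_Phi_b_le a b : Rabs (Phi_b a b) <= exp (Rabs a) + exp (Rabs b).
Proof.
  unfold Phi_b. eapply Rle_trans; [apply Rabs_triang|]. rewrite Rabs_Ropp, !Rabs_mult.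
  pose proof (Rabs_sinh_le_exp_Rabs b). pose proof (cosh_le_exp_Rabs a).
  assert (Rabs (sin b) <= 1) by (apply Rabs_le, SIN_bound).
  assert (Rabs (cos a) <= 1) by (apply Rabs_le, COS_bound).
  rewrite (Rabs_right (cosh a)) by (left; apply cosh_pos).
  pose proof (Rabs_pos (sinh b)). pose proof (Rabs_pos (cos a)).
  pose proof (Rabs_pos (sin b)). pose proof (cosh_pos a). nra.
Qed.

Lemma Phi_0_0 : Phi 0 0 = 2.
Proof. unfold Phi. rewrite cosh_0, cos_0. ring. Qed.

Lemma Rabs_Phi_sub2_le a b M : Rabs a <= M -> Rabs b <= M ->
  Rabs (Phi a b - 2) <= 2 * exp M * (Rabs a + Rabs b).
Proof.
  intros Ha Hb.
  set (D := 2 * exp M * (Rabs a + Rabs b)).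
  assert (Hpath : Rabs ((fun s => Phi (s * a) (s * b)) 1 - (fun s => Phi (s * a) (s * b)) 0)
                  <= D * Rabs (1 - 0)).
  { apply (bounded_variation (fun s => Phi (s * a) (s * b))
      (fun s => a * Phi_a (s * a) (s * b) + b * Phi_b (s * a) (s * b))).
    intros s Hs. rewrite !Rminus_0_r, Rabs_R1 in Hs. split.
    - unfold Phi, Phi_a, Phi_b, cosh, sinh. auto_derive; [easy|unfold Rminus, Rdiv; ring].
    - assert (Hsa : exp (Rabs (s * a)) <= exp M).
      { apply exp_le_compat. rewrite Rabs_mult. pose proof (Rabs_pos a). nra. }
      assert (Hsb : exp (Rabs (s * b)) <= exp M).
      { apply exp_le_compat. rewrite Rabs_mult. pose proof (Rabs_pos b). nra. }
      pose proof (Rabs_Phi_a_le (s * a) (s * b)). pose proof (Rabs_Phi_b_le (s * a) (s * b)).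
      eapply Rle_trans; [apply Rabs_triang|]. rewrite !Rabs_mult.
      unfold D. pose proof (Rabs_pos a). pose proof (Rabs_pos b).
      pose proof (Rabs_pos (Phi_a (s * a) (s * b))). nra. }
  cbv beta in Hpath. rewrite !Rmult_1_l, !Rmult_0_l, Phi_0_0, Rminus_0_r, Rabs_R1 in Hpath.
  lra.
Qed.

Lemma re4_im4_sq x y : re4 x y ^ 2 + im4 x y ^ 2 = (x ^ 2 + y ^ 2) ^ 4.
Proof. unfold re4, im4. ring. Qed.

Lemma sqrt_ge_id q : 0 <= q <= 1 -> q <= sqrt q.
Proof.
  intros Hq. pose proof (sqrt_sqrt q (proj1 Hq)). pose proof (sqrt_pos q).
  assert (sqrt q <= 1) by (rewrite <- sqrt_1; apply sqrt_le_1_alt; lra). nra.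
Qed.

Lemma Rabs_re4_im4_le x y : x ^ 2 + y ^ 2 <= 1 ->
  Rabs (re4 x y) <= sqrt (x ^ 2 + y ^ 2) /\ Rabs (im4 x y) <= sqrt (x ^ 2 + y ^ 2).
Proof.
  intros Hq. set (q := x ^ 2 + y ^ 2) in *.
  assert (Hq0 : 0 <= q) by (unfold q; nra).
  pose proof (sqrt_ge_id q (conj Hq0 Hq)).
  assert (Hsq : q ^ 2 <= q) by nra.
  assert (Hq4 : re4 x y ^ 2 + im4 x y ^ 2 = (q ^ 2) ^ 2) by (rewrite re4_im4_sq; fold q; ring).
  assert (Habs : forall w, w ^ 2 <= (q ^ 2) ^ 2 -> Rabs w <= q ^ 2).
  { intros w Hw. rewrite <- pow2_abs in Hw. pose proof (Rabs_pos w). nra. }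
  split; apply Rle_trans with (q ^ 2); try lra; apply Habs; nra.
Qed.

Lemma Rabs_h4_le x y : in_disc x y ->
  Rabs (h4 x y) <= 4 * Nscale * exp Nscale * sqrt (x ^ 2 + y ^ 2).
Proof.
  unfold in_disc. intros Hd.
  destruct (Rabs_re4_im4_le x y ltac:(lra)) as [Hu Hv].
  assert (Hs1 : sqrt (x ^ 2 + y ^ 2) <= 1).
  { rewrite <- sqrt_1. apply sqrt_le_1_alt. lra. }
  assert (HN : 0 < Nscale) by (unfold Nscale; lra).
  assert (Ha : Rabs (Nscale * re4 x y) <= Nscale * sqrt (x ^ 2 + y ^ 2)).
  { rewrite Rabs_mult, (Rabs_right Nscale) by lra. nra. }
  assert (Hb : Rabs (Nscale * im4 x y) <= Nscale * sqrt (x ^ 2 + y ^ 2)).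
  { rewrite Rabs_mult, (Rabs_right Nscale) by lra. nra. }
  pose proof (Rabs_Phi_sub2_le (Nscale * re4 x y) (Nscale * im4 x y) Nscale ltac:(nra) ltac:(nra)).
  pose proof (exp_pos Nscale). unfold h4. nra.
Qed.

Lemma exp_ge_cubic x : 0 <= x -> 1 + x + x ^ 2 / 2 + x ^ 3 / 6 <= exp x.
Proof. intros Hx. pose proof (exp_ge_taylor x 3 Hx). simpl in *. lra. Qed.

Lemma exp_half_le_cosh a : exp a / 2 <= cosh a.
Proof. unfold cosh. pose proof (exp_pos (- a)). lra. Qed.

Lemma PI_gt_3 : 3 < PI.
Proof. pose proof PI2_3_2. lra. Qed.

Lemma Phi_ge_3_small_angle X Y : 5 / 6 <= X -> 0 <= Y <= 1 / 6 -> 3 <= Phi (6 * X) (6 * Y).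
Proof.
  intros HX HY. unfold Phi. pose proof PI_gt_3.
  assert (Hcos : 1 / 2 <= cos (6 * Y)).
  { rewrite <- cos_PI3. apply cos_decr_1; lra. }
  assert (Hcosh_small : cosh (6 * Y) <= 3).
  { apply Rle_trans with (exp (Rabs (6 * Y))); [apply cosh_le_exp_Rabs|].
    apply Rle_trans with (exp 1); [apply exp_le_compat; apply Rabs_le; lra|apply exp_le_3]. }
  assert (Hcosh_large : 19 <= cosh (6 * X)).
  { apply Rle_trans with (exp (6 * X) / 2); [|apply exp_half_le_cosh].
    pose proof (exp_ge_cubic 5 ltac:(lra)). pose proof (exp_le_compat 5 (6 * X) ltac:(lra)).
    simpl in *. lra. }
  pose proof (COS_bound (6 * X)). pose proof (cosh_pos (6 * Y)). nra.
Qed.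

Lemma Phi_ge_3_resonant a b : 6 <= b <= a -> cos b = 1 -> 3 <= Phi a b.
Proof.
  intros Hab Hcb. unfold Phi. rewrite Hcb. pose proof PI_gt_3.
  assert (Hsb : sin b = 0).
  { pose proof (sin2_cos2 b). rewrite Hcb in H0. unfold Rsqr in H0. nra. }
  assert (Hca : cos a = cos (a - b)).
  { replace a with ((a - b) + b) at 1 by ring. rewrite cos_plus, Hcb, Hsb. ring. }
  assert (Heb : 16 <= exp b).
  { pose proof (exp_ge_cubic b ltac:(lra)). assert (18 <= b ^ 2 / 2 + b ^ 3 / 6) by (simpl; nra). lra. }
  pose proof (exp_half_le_cosh a). pose proof (cosh_pos b).
  destruct (Rle_lt_dec 0 (cos a)) as [Hpos | Hneg].
  - assert (exp b <= exp a) by (apply exp_le_compat; lra).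
    pose proof (Rmult_le_pos _ _ Hpos (Rlt_le _ _ (cosh_pos b))). lra.
  - assert (Hfar : PI / 2 < a - b).
    { destruct (Rle_lt_dec (a - b) (PI / 2)) as [Hle | Hlt]; [|exact Hlt].
      pose proof (cos_ge_0 (a - b) ltac:(lra) Hle). lra. }
    assert (Hea : exp b * (1 + PI / 2) <= exp a).
    { replace a with (b + (a - b)) by ring. rewrite exp_plus.
      pose proof (exp_ineq1_le (a - b)). pose proof (exp_pos b). nra. }
    assert (Hcosh_b : cosh b <= (exp b + 1) / 2).
    { unfold cosh. assert (exp (- b) <= exp 0) by (apply exp_le_compat; lra).
      rewrite exp_0 in *. lra. }
    pose proof (COS_bound a). nra.
Qed.

Lemma exists_nat_between q : 0 <= q -> exists n : nat, q < INR n <= q + 1.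
Proof.
  intros Hq. destruct (archimed q) as [Hup1 Hup2].
  assert (Hz : (0 <= up q)%Z) by (apply le_IZR; lra).
  exists (Z.to_nat (up q)). rewrite INR_IZR_INZ, Z2Nat.id by exact Hz. lra.
Qed.

Lemma exists_resonant_scale Y : 1 / 6 < Y ->
  exists t, 4 < t < 64 /\ cos (t * Y) = 1 /\ 6 <= t * Y.
Proof.
  intros HY. pose proof PI_gt_3. pose proof PI_4.
  destruct (exists_nat_between (4 * Y / (2 * PI))) as [n [Hn1 Hn2]].
  { apply Rlt_le, Rdiv_lt_0_compat; lra. }
  assert (Hq : 4 * Y / (2 * PI) * (2 * PI) = 4 * Y) by (field; lra).
  assert (Hn : 1 <= INR n).
  { destruct n as [|n]; [simpl in Hn1; nra|]. rewrite S_INR. pose proof (pos_INR n). lra. }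
  exists (2 * INR n * PI / Y).
  assert (HtY : 2 * INR n * PI / Y * Y = 2 * INR n * PI) by (field; lra).
  rewrite HtY. split; [split|split].
  - apply Rmult_lt_reg_r with Y; [lra|]. rewrite HtY. nra.
  - apply Rmult_lt_reg_r with Y; [lra|]. rewrite HtY. nra.
  - rewrite <- (Rplus_0_l (2 * INR n * PI)), cos_period. apply cos_0.
  - nra.
Qed.

Lemma exists_scale_Phi_ge_3_sector X Y : 0 <= Y <= X -> X * X + Y * Y = 1 ->
  exists t, 4 < t < 64 /\ 3 <= Phi (t * X) (t * Y).
Proof.
  intros HXY Hunit. destruct (Rle_lt_dec Y (1 / 6)) as [Hsmall | Hlarge].
  - exists 6. split; [lra|]. apply Phi_ge_3_small_angle; nra.
  - destruct (exists_resonant_scale Y Hlarge) as [t [Ht [Hcos Hres]]].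
    exists t. split; [exact Ht|]. apply Phi_ge_3_resonant; [|exact Hcos].
    split; [exact Hres|]. apply Rmult_le_compat_l; lra.
Qed.

Lemma Phi_Rabs a b : Phi (Rabs a) (Rabs b) = Phi a b.
Proof. unfold Phi. rewrite !cosh_Rabs, !cos_Rabs. reflexivity. Qed.

Lemma Phi_comm a b : Phi a b = Phi b a.
Proof. unfold Phi. ring. Qed.

Lemma exists_scale_Phi_ge_3 C S : C * C + S * S = 1 ->
  exists t, 4 < t < 64 /\ 3 <= Phi (t * C) (t * S).
Proof.
  intros Hunit.
  assert (Habs : forall t, 0 < t -> Phi (t * C) (t * S) = Phi (t * Rabs C) (t * Rabs S)).
  { intros t Ht. rewrite <- Phi_Rabs, !Rabs_mult, (Rabs_right t) by lra. reflexivity. }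
  assert (Hunit' : Rabs C * Rabs C + Rabs S * Rabs S = 1).
  { rewrite <- !Rabs_mult, !Rabs_right by nra. exact Hunit. }
  pose proof (Rabs_pos C). pose proof (Rabs_pos S).
  destruct (Rle_lt_dec (Rabs S) (Rabs C)).
  - destruct (exists_scale_Phi_ge_3_sector (Rabs C) (Rabs S)) as [t [Ht Hge]]; [lra|exact Hunit'|].
    exists t. split; [exact Ht|]. rewrite Habs by lra. exact Hge.
  - destruct (exists_scale_Phi_ge_3_sector (Rabs S) (Rabs C)) as [t [Ht Hge]]; [lra|lra|].
    exists t. split; [exact Ht|]. rewrite Habs, Phi_comm by lra. exact Hge.
Qed.

Lemma re4_polar r th : re4 (r * cos th) (r * sin th) = r ^ 4 * cos (4 * th).
Proof.
  replace (4 * th) with (2 * (2 * th)) by ring. rewrite cos_2a, cos_2a, sin_2a.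
  unfold re4. ring.
Qed.

Lemma im4_polar r th : im4 (r * cos th) (r * sin th) = r ^ 4 * sin (4 * th).
Proof.
  replace (4 * th) with (2 * (2 * th)) by ring. rewrite sin_2a, cos_2a, sin_2a.
  unfold im4. ring.
Qed.

Lemma exists_radius t : 4 < t < 64 -> exists r, 1 / 6 < r < 1 / 3 /\ Nscale * r ^ 4 = t.
Proof.
  intros Ht. unfold Nscale.
  set (r := sqrt (sqrt (t / 5184))).
  assert (Hr0 : 0 <= r) by apply sqrt_pos.
  assert (Hr4 : r ^ 4 = t / 5184).
  { replace (r ^ 4) with ((r * r) * (r * r)) by ring.
    unfold r. rewrite sqrt_sqrt by apply sqrt_pos. apply sqrt_sqrt. lra. }
  exists r. split; [split|field_simplify; rewrite Hr4; field].
  - destruct (Rle_lt_dec r (1 / 6)) as [Hle|]; [exfalso|assumption].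
    pose proof (pow_incr r (1 / 6) 4 (conj Hr0 Hle)). lra.
  - destruct (Rle_lt_dec (1 / 3) r) as [Hle|]; [exfalso|assumption].
    pose proof (pow_incr (1 / 3) r 4 ltac:(lra)). lra.
Qed.

Theorem lemma10 :
  exists (h : R -> R -> R) (B : R),
    harmonic_on_disc h /\ 0 < B /\
    (forall x y, in_disc x y -> Rabs (h x y) <= B * sqrt (x ^ 2 + y ^ 2)) /\
    (forall theta, 0 <= theta < 2 * PI ->
       exists r, 1 / 6 < r < 1 / 3 /\ 1 <= h (r * cos theta) (r * sin theta)).
Proof.
  exists h4, (4 * Nscale * exp Nscale).
  split; [exact harmonic_on_disc_h4|].
  split; [pose proof (exp_pos Nscale); unfold Nscale in *; lra|].
  split; [exact Rabs_h4_le|].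
  intros th _.
  assert (Hunit : cos (4 * th) * cos (4 * th) + sin (4 * th) * sin (4 * th) = 1).
  { pose proof (sin2_cos2 (4 * th)). unfold Rsqr in *. lra. }
  destruct (exists_scale_Phi_ge_3 _ _ Hunit) as [t [Ht Hge]].
  destruct (exists_radius t Ht) as [r [Hr Hr4]].
  exists r. split; [exact Hr|].
  unfold h4. rewrite re4_polar, im4_polar, <- !Rmult_assoc, Hr4. lra.
Qed.
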